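(* For every positive integer $m$, the stopping distance of $H(m-1,m)$ is $2^m$.
   Context: All matrices are binary. The matrices $G(r,m)$, $0\le r\le m$, are defined recursively by $G(m,m) = I_{2^m}$, $G(0,m) = (11\cdots1)$ (length $2^m$), and for $0<r<m$, $G(r,m) = \begin{pmatrix} G(r,m-1) & G(r,m-1) \\ \mathbf{0} & G(r-1,m-1)\end{pmatrix}$. Define $H(0,m) = (11\cdots1)$ (length $2^m$), $H(m-1,m) = G(m-1,m)$, $H(m,m) = I_{2^m}$ for all $m\ge0$. For a matrix $H$, the stopping distance $s(H)$ is the largest integer such that for every set of $s(H)-1$ or fewer columns of $H$, the projection of $H$ onto those columns contains at least one row of Hamming weight exactly one. *)

(* Binary matrices are represented as sequences of rows,
   each row a sequence of booleans (true = 1). *)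
From mathcomp Require Import all_boot.
Set Implicit Arguments. Unset Strict Implicit. Unset Printing Implicit Defensive.

Definition id_rows (n : nat) : seq (seq bool) :=
  [seq [seq i == j | j <- iota 0 n] | i <- iota 0 n].

(* G r m, following the recursive definition:
   G(m,m) = I_{2^m}, G(0,m) = all-ones row of length 2^m, and for 0<r<m
   G(r,m) = [[G(r,m-1), G(r,m-1)]; [0, G(r-1,m-1)]].
   (Values for r > m are irrelevant; they are set to the identity.) *)
Fixpoint G (r m : nat) {struct m} : seq (seq bool) :=
  match m with
  | 0 => if r == 0 then [:: [:: true]] else id_rows 1
  | m'.+1 =>
      if r == 0 then [:: nseq (2 ^ m'.+1) true]
      else if m'.+1 <= r then id_rows (2 ^ m'.+1)
      else [seq s ++ s | s <- G r m'] ++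
           [seq nseq (2 ^ m') false ++ s | s <- G r.-1 m']
  end.

(* H(0,m) = all ones, H(m-1,m) = G(m-1,m), H(m,m) = I_{2^m}.
   Only these cases are specified in the context; other r give [::]. *)
Definition H (r m : nat) : seq (seq bool) :=
  if r == 0 then [:: nseq (2 ^ m) true]
  else if (r == m.-1) || (r == m) then G r m
  else [::].

Definition proj_weight (n : nat) (row : seq bool) (S : {set 'I_n}) : nat :=
  #|[set j in S | nth false row j]|.

Definition has_weight_one_row (n : nat) (Hm : seq (seq bool)) (S : {set 'I_n}) : bool :=
  has (fun row => proj_weight row S == 1) Hm.

Definition stopping_prop (n : nat) (Hm : seq (seq bool)) (s : nat) : Prop :=
  forall S : {set 'I_n}, S != set0 -> #|S| < s -> has_weight_one_row Hm S.

Definition is_stopping_distance (n : nat) (Hm : seq (seq bool)) (s : nat) : Prop :=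
  stopping_prop n Hm s /\ forall t, stopping_prop n Hm t -> t <= s.

From mathcomp Require Import all_boot.

(* H(m-1,m) = G(m-1,m), and with n = 2^(k+1) these matrices satisfy
   G(0,1) = (1 1) and G(k+1,k+2) = [[I_n, I_n]; [0, G(k,k+1)]].
   By induction every row has exactly two ones, so the set of all 2^m columns
   has no weight-one row and the stopping distance is at most 2^m.  Conversely,
   let S be a nonempty proper set of columns of G(k+1,k+2).  If S separates
   some pair of columns i, n+i, then the row (e_i, e_i) of the upper block has
   weight one on S; otherwise S is invariant under the shift by n, its trace on
   the last n columns is again nonempty and proper, and induction applies to
   the lower block. *)

Definition row_weight (n : nat) (r : seq bool) (P : nat -> bool) : nat :=
  count (fun j => P j && nth false r j) (iota 0 n).

Definition unit_row (n i : nat) : seq bool := [seq i == j | j <- iota 0 n].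

Lemma size_unit_row n i : size (unit_row n i) = n.
Proof. by rewrite size_map size_iota. Qed.

Lemma row_weight_cat n r1 r2 P : size r1 = n ->
  row_weight (n + n) (r1 ++ r2) P =
  row_weight n r1 P + row_weight n r2 (fun j => P (n + j)).
Proof.
move=> size_r1; rewrite /row_weight iotaD count_cat add0n.
rewrite -(addn0 n) iotaDl addn0 count_map.
congr (_ + _); apply: eq_in_count => j; rewrite mem_iota /= => j_lt_n.
  by rewrite nth_cat size_r1 j_lt_n.
by rewrite nth_cat size_r1 ltnNge leq_addr addKn.
Qed.

Lemma row_weight_unit_row n i P : i < n -> row_weight n (unit_row n i) P = P i.
Proof.
move=> i_lt_n; rewrite /row_weight (eq_in_count (a2 := fun j => P i && (j == i))).
  case: (P i); last by rewrite count_pred0.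
  by rewrite (count_uniq_mem i (iota_uniq 0 n)) mem_iota i_lt_n.
move=> j; rewrite mem_iota /= => j_lt_n.
rewrite (nth_map 0) ?size_iota // nth_iota // add0n eq_sym.
by case: eqP => [->|]; rewrite ?andbF.
Qed.

Lemma row_weight_nseq_false n P : row_weight n (nseq n false) P = 0.
Proof.
rewrite /row_weight (eq_in_count (a2 := pred0)) ?count_pred0 // => j.
by rewrite mem_iota /= => j_lt_n; rewrite nth_nseq j_lt_n andbF.
Qed.

Lemma row_weight_twin n i P : i < n ->
  row_weight (n + n) (unit_row n i ++ unit_row n i) P = P i + P (n + i).
Proof. by move=> i_lt_n; rewrite row_weight_cat ?size_unit_row // !row_weight_unit_row. Qed.

Lemma row_weight_shift n r P :
  row_weight (n + n) (nseq n false ++ r) P = row_weight n r (fun j => P (n + j)).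
Proof. by rewrite row_weight_cat ?size_nseq // row_weight_nseq_false. Qed.

Lemma G_subdiag0 : G 0 1 = [:: [:: true; true]].
Proof. by []. Qed.

Lemma G_subdiagS k : G k.+1 k.+2 =
  [seq s ++ s | s <- [seq unit_row (2 ^ k.+1) i | i <- iota 0 (2 ^ k.+1)]] ++
  [seq nseq (2 ^ k.+1) false ++ s | s <- G k k.+1].
Proof. by rewrite /= ltnn leqnn. Qed.

Lemma expn2S k : 2 ^ k.+1 = 2 ^ k + 2 ^ k.
Proof. by rewrite expnS mul2n addnn. Qed.

Lemma G_subdiag_row_weight k (P : nat -> bool) :
  (forall j, j < 2 ^ k.+1 -> P j) ->
  {in G k k.+1, forall r, row_weight (2 ^ k.+1) r P = 2}.
Proof.
elim: k P => [|k IH] P P_full r.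
  by rewrite G_subdiag0 inE => /eqP->; rewrite /row_weight /= !P_full.
rewrite G_subdiagS expn2S in P_full *; set n := 2 ^ k.+1 in IH P_full *.
rewrite mem_cat => /orP[].
  case/mapP=> s /mapP[i]; rewrite mem_iota add0n => i_lt_n -> ->.
  by rewrite row_weight_twin // !P_full ?ltn_add2l // ltn_addr.
case/mapP=> s s_in ->; rewrite row_weight_shift.
by apply: IH s_in => j j_lt_n; rewrite P_full ?ltn_add2l.
Qed.

Definition nonconstant_on (n : nat) (P : nat -> bool) : Prop :=
  exists i j, [/\ i < n, j < n & P i != P j].

Lemma nonconstant_on_shift n P : nonconstant_on (n + n) P ->
  (forall i, i < n -> P i = P (n + i)) -> nonconstant_on n (fun j => P (n + j)).
Proof.
move=> [i [j [i_lt j_lt Pij]]] P_periodic.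
have fold_half x : x < n + n -> exists2 y, y < n & P x = P (n + y).
  case: (ltnP x n) => [x_lt_n|n_le_x] x_lt; first by exists x => //; apply: P_periodic.
  by exists (x - n); rewrite ?ltn_subLR ?subnKC.
have [i' i'_lt Pi] := fold_half i i_lt; have [j' j'_lt Pj] := fold_half j j_lt.
by exists i', j'; rewrite -Pi -Pj.
Qed.

Lemma G_subdiag_weight_one k (P : nat -> bool) : nonconstant_on (2 ^ k.+1) P ->
  has (fun r => row_weight (2 ^ k.+1) r P == 1) (G k k.+1).
Proof.
elim: k P => [|k IH] P.
  move=> [[|[|i]] [[|[|j]] [//= _ _]]]; rewrite /row_weight /=;
    by case: (P 0) (P 1) => [] [].
rewrite G_subdiagS expn2S has_cat; set n := 2 ^ k.+1 => P_nonconst.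
have [/existsP[i Pi_neq]|P_periodic] := boolP [exists i : 'I_n, P i != P (n + i)].
  apply/orP; left; rewrite !has_map; apply/hasP; exists (val i).
    by rewrite mem_iota add0n ltn_ord.
  by rewrite /= row_weight_twin //; move: Pi_neq; case: (P _) (P _) => [] [].
apply/orP; right; rewrite has_map; apply: sub_has (IH (fun j => P (n + j)) _) => [r|].
  by rewrite /= row_weight_shift.
apply: nonconstant_on_shift P_nonconst _ => i i_lt_n; apply/eqP.
by apply: contraNT P_periodic => Pi_neq; apply/existsP; exists (Ordinal i_lt_n).
Qed.

Definition in_cols {n : nat} (S : {set 'I_n}) (j : nat) : bool :=
  if insub j is Some i then i \in S else false.

Lemma in_cols_ord n (S : {set 'I_n}) (i : 'I_n) : in_cols S i = (i \in S).
Proof. by rewrite /in_cols valK. Qed.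

Lemma has_weight_one_rowE n (Hm : seq (seq bool)) (S : {set 'I_n}) :
  has_weight_one_row Hm S = has (fun r => row_weight n r (in_cols S) == 1) Hm.
Proof.
apply: eq_has => r; rewrite /proj_weight /row_weight cardE /enum_mem size_filter.
rewrite -enumT -val_enum_ord count_map; congr (_ == 1).
by apply: eq_count => i; rewrite !inE in_cols_ord.
Qed.

Lemma H_subdiag m : 0 < m -> H m.-1 m = G m.-1 m.
Proof. by case: m => [|[|k]] //; rewrite /H /= eqxx. Qed.

Theorem lemma11 (m : nat) : 0 < m ->
  is_stopping_distance (2 ^ m) (H m.-1 m) (2 ^ m).
Proof.
move=> m_gt0; rewrite H_subdiag //; case: m m_gt0 => // k _; rewrite [k.+1.-1]/=.
split=> [S /set0Pn[a a_in_S] S_small | t stop_t].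
  have /subsetPn[b _ b_notin_S] : ~~ ([set: 'I_(2 ^ k.+1)] \subset S).
    by apply: contraTN S_small => /subset_leq_card; rewrite cardsT card_ord leqNgt.
  rewrite has_weight_one_rowE; apply: G_subdiag_weight_one.
  by exists a, b; rewrite !in_cols_ord a_in_S (negbTE b_notin_S).
rewrite leqNgt; apply/negP => t_large.
have /stop_t : [set: 'I_(2 ^ k.+1)] != set0.
  by apply/set0Pn; exists (Ordinal (expn_gt0 2 k.+1)).
rewrite cardsT card_ord => /(_ t_large); rewrite has_weight_one_rowE.
case/hasP=> r /G_subdiag_row_weight-> //.
by move=> j j_lt; rewrite -[j]/(val (Ordinal j_lt)) in_cols_ord inE.
Qed.
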